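(* Every tropical halo has tempered growth.
   Context: A halo is a commutative unital semiring with a partial order compatible with its operations ($x\le z,y\le t\Rightarrow xy\le zt,\ x+y\le z+t$). It is tropical if it is not $\{0\}$, its order is total, and $a+b=\max(a,b)$. A halo $R$ has tempered growth if for every non-zero $P\in\mathbb{N}[X]$ and every $x\in R$, ($x^n\le P(n)$ in $R$ for all $n\in\mathbb{N}$) implies $x\le1$; here a natural number $m$ is interpreted in $R$ as $1+\dots+1$. *)

From mathcomp Require Import all_boot all_algebra.
Set Implicit Arguments. Unset Strict Implicit. Unset Printing Implicit Defensive.
Import GRing.Theory.
Local Open Scope ring_scope.

Definition is_halo (R : comPzSemiRingType) (le : rel R) : Prop :=
  [/\ reflexive le, antisymmetric le, transitive le,
      (forall x y z t : R, le x z -> le y t -> le (x * y) (z * t)) &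
      (forall x y z t : R, le x z -> le y t -> le (x + y) (z + t))].

Definition is_tropical (R : comPzSemiRingType) (le : rel R) : Prop :=
  [/\ exists x : R, x != 0,
      total le &
      (forall a b : R, a + b = (if le a b then b else a))].

Definition tempered_growth (R : comPzSemiRingType) (le : rel R) : Prop :=
  forall (P : {poly nat}) (x : R), P != 0 ->
    (forall n : nat, le (x ^+ n) ((P.[n])%:R)) -> le x 1.

(* In a tropical semiring 1 + 1 = max(1, 1) = 1, so every positive integer is
   interpreted as 1.  A nonzero polynomial with natural coefficients is
   positive at 1, hence the hypothesis at n = 1 already reads x <= 1. *)
From mathcomp Require Import all_boot all_algebra.
Import GRing.Theory.
Local Open Scope ring_scope.

Lemma horner1_gt0 (P : {poly nat}) : P != 0 -> (0 < P.[1%N])%N.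
Proof.
rewrite -lead_coef_eq0 -lt0n /lead_coef horner_coef.
case sizeP: (size P) => [|s] lcP; first by rewrite nth_default ?sizeP in lcP.
by rewrite big_ord_recr /= expr1n mulr1 (leq_trans lcP) ?leq_addl.
Qed.

Section IdempotentOne.

Variables (R : pzSemiRingType).
Hypothesis add11 : 1 + 1 = 1 :> R.

Lemma pnatr_eq1 (m : nat) : (0 < m)%N -> m%:R = 1 :> R.
Proof.
case: m => [//|m] _; elim: m => [//|m IHm].
by rewrite mulrS IHm add11.
Qed.

End IdempotentOne.

Lemma tropical_addrr (R : comPzSemiRingType) (le : rel R) :
  is_tropical le -> forall x : R, x + x = x.
Proof. by case=> _ _ addE x; rewrite addE if_same. Qed.

Theorem lemma1p28 (R : comPzSemiRingType) (le : rel R) :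
  is_halo le -> is_tropical le -> tempered_growth le.
Proof.
move=> _ trop P x P_neq0 xP.
have := xP 1%N; rewrite expr1 pnatr_eq1 ?horner1_gt0 //.
exact: tropical_addrr trop 1.
Qed.
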